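(* For every integer $q\geq 1$, the graph $2*Q_q$ divides $Q_{2q}$.
   Context: $Q_q$ denotes the $q$-dimensional hypercube graph (vertices are $q$-tuples of $0$'s and $1$'s, adjacent iff they differ in exactly one coordinate). For a graph $G$, the $2$-stretch $2*G$ is the graph obtained from $G$ by replacing each edge by a path with $2$ edges (i.e. subdividing each edge once). For graphs $H$ and $G$, ''$H$ divides $G$'' means there is a collection of subgraphs $H_i$ of $G$, each isomorphic to $H$, such that $E(G)$ is the disjoint union of the edge sets $E(H_i)$. *)

(* Simple graphs are given by a finite vertex type V and an
   adjacency relation e : rel V (symmetric, irreflexive for the graphs used). *)
From mathcomp Require Import all_boot.
Set Implicit Arguments. Unset Strict Implicit. Unset Printing Implicit Defensive.

Definition edges (V : finType) (e : rel V) : {set {set V}} :=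
  [set E : {set V} | [exists x : V, exists y : V, e x y && (E == [set x; y])]].

Definition hcube_vert (q : nat) : finType := {ffun 'I_q -> bool}.
Definition hcube (q : nat) : rel (hcube_vert q) :=
  fun u v => #|[set i | u i != v i]| == 1.
Arguments hcube q : clear implicits.

(* The 2-stretch 2*G: original vertices plus one new vertex per edge,
   the new vertex of edge {x,y} being adjacent to x and y. *)
Definition edge_sub (V : finType) (e : rel V) : finType :=
  {E : {set V} | E \in edges e}.
Definition stretch_vert (V : finType) (e : rel V) : finType :=
  (V + edge_sub e)%type.
Definition stretch (V : finType) (e : rel V) : rel (stretch_vert e) :=
  fun a b =>
    match a, b with
    | inl x, inr E => x \in val E
    | inr E, inl x => x \in val E
    | _, _ => false
    end.
Arguments stretch {V} e.

(* H divides G: there are copies H_i (i < n) of H in G, given by injective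
   graph homomorphisms f i : V_H -> V_G (H_i = image of f i, with edge set the
   image of E(H)), such that E(G) is the disjoint union of the E(H_i): every
   edge of G is the image of exactly one pair (copy i, edge of H). *)
Definition divides (VH : finType) (h : rel VH) (VG : finType) (g : rel VG) :=
  exists (n : nat) (f : 'I_n -> VH -> VG),
    [/\ forall i, injective (f i),
        forall i x y, h x y -> g (f i x) (f i y) &
        forall E, E \in edges g ->
          #|[set p : 'I_n * {set VH} | (p.2 \in edges h) && (f p.1 @: p.2 == E)]| = 1].

From mathcomp Require Import all_boot.
Set Implicit Arguments. Unset Strict Implicit. Unset Printing Implicit Defensive.

(* Split the coordinates of Q_(2q) into two halves, so that its vertices are pairs (u, v) of
   vertices of Q_q and an edge changes exactly one half; the parity of the weight of (u, v)
   is par u + par v.  There is one copy of 2*Q_q for each a in Q_q, determined by an even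
   vector d (a corrected in one coordinate if it is odd) and by the parity of a.  It sends
   a vertex x of Q_q to (x, x + d), an even vertex, and the midpoint of the edge
   {m, m + e_i}, m_i = 0, to the odd vertex (m, m + e_i + d) if a is odd and to
   (m + e_i, m + d) if a is even.  Thus the edge from x towards x + e_i becomes the edge
   from (x, x + d) that flips coordinate i of the left half when par a = x_i and of the
   right half otherwise.  Conversely an edge of Q_(2q) leaving an even vertex (u, v)
   recovers x = u, d = u + v, the direction i, and, from the half that changes, the
   parity of a: every edge of Q_(2q) lies in exactly one copy. *)

Lemma edgesP (V : finType) (e : rel V) E :
  reflect (exists x y, e x y /\ E = [set x; y]) (E \in edges e).
Proof.
rewrite inE; apply: (iffP existsP) => [[x /existsP [y /andP [exy /eqP ->]]]|[x [y [exy ->]]]].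
  by exists x, y.
by exists x; apply/existsP; exists y; rewrite exy eqxx.
Qed.

Lemma edges_neq0 (V : finType) (e : rel V) E : E \in edges e -> E != set0.
Proof. by case/edgesP => x [y [_ ->]]; apply/set0Pn; exists x; rewrite set21. Qed.

Lemma stretch_edgeP (V : finType) (e : rel V) S :
  S \in edges (stretch e) -> exists x (M : edge_sub e), x \in val M /\ S = [set inl x; inr M].
Proof.
case/edgesP => -[x|M] [[y|M'] [//= xM' ->]]; first by exists x, M'.
by exists y, M; rewrite setUC.
Qed.

Lemma stretch_dart_edge (V : finType) (e : rel V) x (M : edge_sub e) :
  x \in val M -> [set inl x; inr M] \in edges (stretch e).
Proof. by move=> xM; apply/edgesP; exists (inl x), (inr M). Qed.

Lemma eq_set2_sep (T : finType) (s : pred T) (a b c d : T) :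
  [set a; b] = [set c; d] -> ~~ s a -> s b -> ~~ s c -> s d -> a = c /\ b = d.
Proof.
move=> E sa sb sc sd.
have : a \in [set c; d] by rewrite -E set21.
have : b \in [set c; d] by rewrite -E set22.
by do 2 case/set2P => ? ; subst; rewrite ?sb ?sd in sa sc *.
Qed.

Section BoolVectors.
Variable n : nat.
Local Notation vec := {ffun 'I_n -> bool}.
Implicit Types (u v x d : vec) (i : 'I_n).

Definition xorv (u v : vec) : vec := [ffun j => u j (+) v j].
Definition flip (i : 'I_n) (u : vec) : vec := [ffun j => u j (+) (j == i)].
Definition par (u : vec) : bool := \big[addb/false]_(j < n) u j.

Lemma flipE i u j : flip i u j = u j (+) (j == i).
Proof. by rewrite ffunE. Qed.

Lemma flipK i : involutive (flip i).
Proof. by move=> u; apply/ffunP => j; rewrite !ffunE -addbA addbb addbF. Qed.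

Lemma flip_neq i u : flip i u != u.
Proof. by apply/eqP => /ffunP /(_ i); rewrite flipE eqxx addbT; case: (u i). Qed.

Lemma flip_idx_inj u i i' : flip i u = flip i' u -> i = i'.
Proof. by move/ffunP => /(_ i); rewrite !flipE eqxx; case: (u i); case: eqP. Qed.

Lemma xorvK d : involutive (xorv ^~ d).
Proof. by move=> u; apply/ffunP => j; rewrite !ffunE -addbA addbb addbF. Qed.

Lemma xorvKl u : cancel (xorv u) (xorv u).
Proof. by move=> d; apply/ffunP => j; rewrite !ffunE addbA addbb. Qed.

Lemma xorv_flip i u d : xorv (flip i u) d = flip i (xorv u d).
Proof. by apply/ffunP => j; rewrite !ffunE addbAC. Qed.

Lemma par_xorv u v : par (xorv u v) = par u (+) par v.
Proof. by rewrite /par -big_split /=; apply: eq_bigr => j _; rewrite ffunE. Qed.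

Lemma par_flip i u : par (flip i u) = ~~ par u.
Proof.
rewrite /par (bigD1 i) // [X in _ = ~~ X](bigD1 i) //= flipE eqxx addbT addNb.
by congr (~~ (_ (+) _)); apply: eq_bigr => j /negbTE ji; rewrite flipE ji addbF.
Qed.

Lemma hcubeP u v : reflect (exists i, v = flip i u) (hcube n u v).
Proof.
apply: (iffP cards1P) => [[i /setP diff_i]|[i ->]]; exists i.
  by apply/ffunP => j; move: (diff_i j); rewrite !inE flipE; case: (u j); case: (v j) => <-.
by apply/setP => j; rewrite !inE flipE; case: (u j); case: (j == i).
Qed.

Lemma hcube_flip i u : hcube n u (flip i u).
Proof. by apply/hcubeP; exists i. Qed.

Lemma hcubeC u v : hcube n u v = hcube n v u.
Proof. by apply/hcubeP/hcubeP => -[i ->]; exists i; rewrite flipK. Qed.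

Lemma par_hcube u v : hcube n u v -> par v = ~~ par u.
Proof. by case/hcubeP => i ->; apply: par_flip. Qed.

Lemma diff_eq0 u v : (#|[set j | u j != v j]| == 0) = (u == v).
Proof.
rewrite cards_eq0; apply/eqP/eqP => [/setP uv|->]; last by apply/setP => j; rewrite !inE eqxx.
by apply/ffunP => j; move: (uv j); rewrite !inE; case: eqP.
Qed.

Lemma hcube_edgeP (M : {set vec}) x :
  M \in edges (hcube n) -> x \in M -> exists i, M = [set x; flip i x].
Proof.
case/edgesP => y [z [/hcubeP [i ->] ->]].
by case/set2P => ->; exists i; rewrite ?flipK 1?setUC.
Qed.

Lemma flip_edge_in_edges x i : [set x; flip i x] \in edges (hcube n).
Proof. by apply/edgesP; exists x, (flip i x); rewrite hcube_flip. Qed.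

Definition cube_edge x i : edge_sub (hcube n) :=
  Sub [set x; flip i x] (flip_edge_in_edges x i).

Lemma edge_subP (M : edge_sub (hcube n)) x : x \in val M -> exists i, M = cube_edge x i.
Proof. by move/(hcube_edgeP (valP M)) => [i eM]; exists i; apply: val_inj. Qed.

Definition edge_min (M : {set vec}) : vec := [ffun j => [forall x in M, x j]].
Definition edge_max (M : {set vec}) : vec := [ffun j => [exists x in M, x j]].

Lemma edge_min_cube x i : edge_min [set x; flip i x] = if x i then flip i x else x.
Proof.
apply/ffunP => j; rewrite ffunE.
have -> : [forall y in [set x; flip i x], y j] = x j && flip i x j.
  apply/forall_inP/andP => [h|[xj fj] y /set2P [] -> //].
  by split; apply: h; rewrite !inE eqxx ?orbT.
by case: ifP => xi; rewrite !flipE; case: eqP => [->|_]; rewrite ?xi ?addbF ?andbb.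
Qed.

Lemma edge_max_cube x i : edge_max [set x; flip i x] = if x i then x else flip i x.
Proof.
apply/ffunP => j; rewrite ffunE.
have -> : [exists y in [set x; flip i x], y j] = x j || flip i x j.
  apply/exists_inP/orP => [[y /set2P [] -> yj]|[xj|fj]]; [by left|by right| |].
    by exists x; rewrite ?inE ?eqxx.
  by exists (flip i x); rewrite ?inE ?eqxx ?orbT.
by case: ifP => xi; rewrite !flipE; case: eqP => [->|_]; rewrite ?xi ?addbF ?orbb.
Qed.

Lemma edge_min_maxK (M : {set vec}) :
  M \in edges (hcube n) -> [set edge_min M; edge_max M] = M.
Proof.
move=> EM; have /set0Pn [x xM] := edges_neq0 EM.
have [i ->] := hcube_edgeP EM xM.
by rewrite edge_min_cube edge_max_cube; case: (x i); rewrite // setUC.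
Qed.

End BoolVectors.

Section CubeProduct.
Variables m n : nat.
Implicit Types (u : {ffun 'I_m -> bool}) (v : {ffun 'I_n -> bool}).
Implicit Types w : {ffun 'I_(m + n) -> bool}.

Definition vcat u v : {ffun 'I_(m + n) -> bool} :=
  [ffun j => match split j with inl i => u i | inr i => v i end].
Definition vleft w : {ffun 'I_m -> bool} := [ffun i => w (lshift n i)].
Definition vright w : {ffun 'I_n -> bool} := [ffun i => w (rshift m i)].

Lemma vcat_lshift u v i : vcat u v (lshift n i) = u i.
Proof. by rewrite ffunE (unsplitK (inl i)). Qed.

Lemma vcat_rshift u v i : vcat u v (rshift m i) = v i.
Proof. by rewrite ffunE (unsplitK (inr i)). Qed.

Lemma vcatK w : vcat (vleft w) (vright w) = w.
Proof. by apply/ffunP => j; rewrite ffunE; case: split_ordP => i ->; rewrite ffunE. Qed.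

Lemma vcat_inj u u' v v' : vcat u v = vcat u' v' -> u = u' /\ v = v'.
Proof.
move=> e; split; apply/ffunP => i.
  by rewrite -(vcat_lshift u v) e vcat_lshift.
by rewrite -(vcat_rshift u v) e vcat_rshift.
Qed.

Lemma par_vcat u v : par (vcat u v) = par u (+) par v.
Proof.
by rewrite /par big_split_ord /=; congr addb; apply: eq_bigr => i _;
  rewrite ?vcat_lshift ?vcat_rshift.
Qed.

Lemma card_diff_vcat u u' v v' :
  #|[set j | vcat u v j != vcat u' v' j]| =
  #|[set i | u i != u' i]| + #|[set i | v i != v' i]|.
Proof.
rewrite -!sum1dep_card big_split_ord /=.
by congr addn; apply: eq_bigl => i; rewrite ?vcat_lshift ?vcat_rshift.
Qed.

Lemma hcube_vcat u u' v v' :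
  hcube (m + n) (vcat u v) (vcat u' v') =
  hcube m u u' && (v == v') || (u == u') && hcube n v v'.
Proof.
rewrite /hcube card_diff_vcat -!diff_eq0.
by case: #|_| => [|[|?]]; case: #|_| => [|[|?]].
Qed.

End CubeProduct.

Section Embedding.
Variable q : nat.
Variable i0 : 'I_q.
Local Notation vec := {ffun 'I_q -> bool}.
Implicit Types (a x d : vec) (i : 'I_q).

Definition even_part a : vec := if par a then flip i0 a else a.

Lemma par_even_part a : par (even_part a) = false.
Proof. by rewrite /even_part; case: ifP => pa; rewrite ?par_flip pa. Qed.

Lemma even_part_inj a a' : even_part a = even_part a' -> par a = par a' -> a = a'.
Proof.
by rewrite /even_part => e pa; rewrite pa in e; case: (par a') e => // /(can_inj (flipK i0)).
Qed.

Lemma even_partP d b : par d = false -> exists a, even_part a = d /\ par a = b.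
Proof.
move=> pd; exists (if b then flip i0 d else d); rewrite /even_part.
by case: b; rewrite ?par_flip pd //= flipK.
Qed.

Definition embed a (s : stretch_vert (hcube q)) : {ffun 'I_(q + q) -> bool} :=
  match s with
  | inl x => vcat x (xorv x (even_part a))
  | inr M => if par a then vcat (edge_min (val M)) (xorv (edge_max (val M)) (even_part a))
             else vcat (edge_max (val M)) (xorv (edge_min (val M)) (even_part a))
  end.

Lemma embed_cube_edge a x i :
  embed a (inr (cube_edge x i)) =
  if par a == x i then vcat (flip i x) (xorv x (even_part a))
  else vcat x (flip i (xorv x (even_part a))).
Proof.
rewrite /= edge_min_cube edge_max_cube.
by case: (par a); case: (x i); rewrite //= ?xorv_flip ?flipK.
Qed.

Lemma cube_edgeP (M : edge_sub (hcube q)) : exists x i, M = cube_edge x i.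
Proof.
have /set0Pn [x xM] := edges_neq0 (valP M).
by have [i ->] := edge_subP xM; exists x, i.
Qed.

Lemma par_embed_vertex a x : par (embed a (inl x)) = false.
Proof. by rewrite /= par_vcat par_xorv addbA addbb par_even_part. Qed.

Lemma par_embed_subdivision a M : par (embed a (inr M)) = true.
Proof.
have [x [i ->]] := cube_edgeP M; rewrite embed_cube_edge.
by case: ifP; rewrite par_vcat ?par_flip par_xorv par_even_part; case: (par x).
Qed.

Lemma embed_inj a : injective (embed a).
Proof.
case=> [x|M] [y|M'].
- by case/vcat_inj => ->.
- by move/(congr1 (@par _)); rewrite par_embed_vertex par_embed_subdivision.
- by move/(congr1 (@par _)); rewrite par_embed_vertex par_embed_subdivision.
move=> e; have [emin emax] : edge_min (val M) = edge_min (val M') /\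
                            edge_max (val M) = edge_max (val M').
  by move: e => /=; case: (par a) => /vcat_inj [? /(can_inj (xorvK _))].
congr inr; apply: val_inj.
by rewrite -(edge_min_maxK (valP M)) -(edge_min_maxK (valP M')) emin emax.
Qed.

Lemma embed_hom a s s' : stretch (hcube q) s s' -> hcube (q + q) (embed a s) (embed a s').
Proof.
have hom_dart x (M : edge_sub (hcube q)) :
    x \in val M -> hcube (q + q) (embed a (inl x)) (embed a (inr M)).
  case/edge_subP => i ->; rewrite embed_cube_edge.
  by case: ifP => _; rewrite hcube_vcat eqxx hcube_flip ?orbT.
case: s s' => [x|M] [y|M'] // xM; first exact: hom_dart.
by rewrite hcubeC; apply: hom_dart.
Qed.

Lemma embed_copy_uniq a a' x x' i i' :
  embed a (inl x) = embed a' (inl x') ->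
  embed a (inr (cube_edge x i)) = embed a' (inr (cube_edge x' i')) -> a = a'.
Proof.
case/vcat_inj => <- /(can_inj (xorvKl x)) ed; rewrite !embed_cube_edge ed => emid.
apply: (even_part_inj ed); move: emid.
case: ifP => pa; case: ifP => pa' /vcat_inj [e1 e2].
- by move: pa pa'; rewrite (flip_idx_inj e1); case: (par a); case: (par a'); case: (x i').
- by have := flip_neq i x; rewrite e1 eqxx.
- by have := flip_neq i' x; rewrite -e1 eqxx.
by move: pa pa'; rewrite (flip_idx_inj e2); case: (par a); case: (par a'); case: (x i').
Qed.

Lemma embed_edge_uniq a a' S S' :
  S \in edges (stretch (hcube q)) -> S' \in edges (stretch (hcube q)) ->
  embed a @: S = embed a' @: S' -> a = a' /\ S = S'.
Proof.
move=> /stretch_edgeP [x [M [/edge_subP [i ->] ->]]].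
move=> /stretch_edgeP [x' [M' [/edge_subP [i' ->] ->]]].
rewrite !imsetU1 !imset_set1 => /(eq_set2_sep (s := @par _)).
rewrite !par_embed_vertex !par_embed_subdivision => /(_ isT isT isT isT) [ex eM].
have ea := embed_copy_uniq ex eM; subst a'.
by rewrite (embed_inj ex) (embed_inj eM).
Qed.

Lemma embed_edge_exists w w' :
  hcube (q + q) w w' -> par w = false ->
  exists a x i, embed a (inl x) = w /\ embed a (inr (cube_edge x i)) = w'.
Proof.
rewrite -(vcatK w) -(vcatK w') par_vcat -par_xorv.
set u := vleft w; set d := xorv u (vright w); rewrite -(xorvKl u (vright w)) -/d.
move=> + pd; rewrite hcube_vcat.
case/orP => [/andP [/hcubeP [i ->] /eqP <-]|/andP [/eqP <- /hcubeP [i ->]]].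
  have [a [ea pa]] := even_partP (u i) pd.
  by exists a, u, i; rewrite embed_cube_edge /= ea pa eqxx.
have [a [ea pa]] := even_partP (~~ u i) pd.
by exists a, u, i; rewrite embed_cube_edge /= ea pa; case: (u i).
Qed.

End Embedding.

Theorem proposition2 (q : nat) : 1 <= q -> divides (stretch (hcube q)) (hcube (2 * q)).
Proof.
case: q => [//|p] _; rewrite mul2n -addnn.
pose f (k : 'I_#|{ffun 'I_p.+1 -> bool}|) := embed ord0 (enum_val k).
exists #|{ffun 'I_p.+1 -> bool}|, f; split => [k|k x y|E].
- exact: embed_inj.
- exact: embed_hom.
case/edgesP => w [w' [ww' ->]].
wlog pw : w w' ww' / par w = false => [wlog_even|].
  case pw: (par w); last exact: wlog_even.
  by rewrite setUC; apply: wlog_even; rewrite 1?hcubeC // (par_hcube ww') pw.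
have [a [x [i [ex ei]]]] := embed_edge_exists ord0 ww' pw.
set S0 := [set inl x; inr (cube_edge x i)].
have S0E : S0 \in edges (stretch (hcube p.+1)) by apply: stretch_dart_edge; apply: set21.
have S0w : embed ord0 a @: S0 = [set w; w'] by rewrite imsetU1 imset_set1 ex ei.
apply/eqP/cards1P; exists (enum_rank a, S0); apply/setP => -[k S].
rewrite in_set1 in_set /=; apply/andP/eqP => [[SE /eqP kS]|[-> ->]].
  have [<- ->] := embed_edge_uniq SE S0E (etrans kS (esym S0w)).
  by rewrite enum_valK.
by rewrite S0E /f enum_rankK S0w.
Qed.
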